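(* Let $0<\alpha<1$. Let $(x(t))_{t\ge 0}$ be a sequence of nonnegative reals (attempt rates of a station) and $(\bar{x}(t))_{t\ge0}$ a sequence of positive reals (fair attempt rates). Define $p(0)=0$ and, for $t\ge 0$, $$p(t+1)=\max\Big(0,\; p(t)+\alpha\Big(\tfrac{x(t)}{\bar{x}(t)}-1\Big)\Big),\qquad P_{NACK}(t)=\min\{p(t),1\}.$$ Suppose the normalised attempt rate depends on the acknowledgement-suppression probability through a function $h:[0,1]\to\mathbb{R}$, i.e. $x(t)/\bar{x}(t)=h(P_{NACK}(t))$ for all $t$, where: (i) $h(0)>1$; (ii) $h(1)<1$; (iii) $h$ is strictly decreasing and Lipschitz with a Lipschitz constant smaller than $2/\alpha$. Then the algorithm converges to a point where $x(t)=\bar{x}(t)$; that is, $p(t)\to P$ where $P$ is the unique point of $[0,1]$ with $h(P)=1$, and hence $x(t)/\bar{x}(t)\to 1$.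
   Context: $p(t)$ is the accumulated penalty of a (moderately misbehaving) station under an access-point policing algorithm, and $P_{NACK}(t)$ is the probability with which the access point suppresses acknowledgements of that station's frames at step $t$. *)

From Stdlib Require Import Reals.
Open Scope R_scope.

Fixpoint penalty (alpha : R) (x xbar : nat -> R) (t : nat) : R :=
  match t with
  | O => 0
  | S t' => Rmax 0 (penalty alpha x xbar t' + alpha * (x t' / xbar t' - 1))
  end.

Definition p_nack (alpha : R) (x xbar : nat -> R) (t : nat) : R :=
  Rmin (penalty alpha x xbar t) 1.

(* The map p |-> max(0, p + alpha (h(min(p,1)) - 1)) moves p towards the root P
   of h = 1: since h is decreasing, the increment alpha (h - 1) points towards P,
   and since its size is at most alpha L |p - P| < 2 |p - P| it cannot overshoot
   P by more than the current distance. Hence |p(t) - P| is nonincreasing, and it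
   drops by a fixed amount whenever p(t) stays at distance at least c from P,
   because h is strictly decreasing; so |p(t) - P| -> 0. *)
From Stdlib Require Import Reals Lra Lia.
Open Scope R_scope.

Lemma Rabs_Rmax0_le y P : 0 <= P -> Rabs (Rmax 0 y - P) <= Rabs (y - P).
Proof.
intros. unfold Rmax; destruct Rle_dec; unfold Rabs; repeat destruct Rcase_abs; lra.
Qed.

Lemma Rabs_Rmin1_le q P : P <= 1 -> Rabs (Rmin q 1 - P) <= Rabs (q - P).
Proof.
intros. unfold Rmin; destruct Rle_dec; unfold Rabs; repeat destruct Rcase_abs; lra.
Qed.

Lemma Rabs_clamp01_le a b :
  Rabs (Rmax 0 (Rmin a 1) - Rmax 0 (Rmin b 1)) <= Rabs (a - b).
Proof.
unfold Rmax, Rmin; repeat destruct Rle_dec; unfold Rabs; repeat destruct Rcase_abs; lra.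
Qed.

Lemma Rabs_add_opposite_le d e m :
  d * e <= 0 -> m <= Rabs e -> Rabs e <= 2 * Rabs d - m ->
  Rabs (d + e) <= Rabs d - m.
Proof.
intros Hde. unfold Rabs; repeat destruct Rcase_abs; nra.
Qed.

Lemma Rlt_mul_div_succ L eps : 0 <= L -> 0 < eps -> L * (eps / (L + 1)) < eps.
Proof.
intros HL Heps. apply Rmult_lt_reg_r with (L + 1); [lra|].
replace (L * (eps / (L + 1)) * (L + 1)) with (L * eps) by (field; lra). nra.
Qed.

Lemma lipschitz_continuity (f : R -> R) L :
  0 <= L -> (forall a b, Rabs (f a - f b) <= L * Rabs (a - b)) -> continuity f.
Proof.
intros HL Hf z eps Heps. exists (eps / (L + 1)).
split; [apply Rdiv_lt_0_compat; lra|].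
intros y [_ Hy]; simpl in *; unfold Rdist in *.
eapply Rle_lt_trans; [apply Hf|].
eapply Rle_lt_trans; [|apply (Rlt_mul_div_succ L eps HL Heps)].
apply Rmult_le_compat_l; lra.
Qed.

Lemma Un_cv_lipschitz_image (u v : nat -> R) l m L :
  0 <= L -> (forall n, Rabs (v n - m) <= L * Rabs (u n - l)) ->
  Un_cv u l -> Un_cv v m.
Proof.
intros HL Hvu Hu eps Heps.
destruct (Hu (eps / (L + 1))) as [N HN]; [apply Rdiv_lt_0_compat; lra|].
exists N. intros n Hn. specialize (HN n Hn). unfold Rdist in *.
eapply Rle_lt_trans; [apply Hvu|].
eapply Rle_lt_trans; [|apply (Rlt_mul_div_succ L eps HL Heps)].
apply Rmult_le_compat_l; lra.
Qed.

Section UniformDescent.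

Variables (u : nat -> R) (P : R).

Hypothesis u_nonexpansive : forall n, Rabs (u (S n) - P) <= Rabs (u n - P).

Hypothesis u_descent : forall c, 0 < c -> exists d, 0 < d /\
  forall n, c <= Rabs (u n - P) -> Rabs (u (S n) - P) <= Rabs (u n - P) - d.

Lemma uniform_descent_bound c d :
  (forall n, c <= Rabs (u n - P) -> Rabs (u (S n) - P) <= Rabs (u n - P) - d) ->
  forall n, Rabs (u n - P) < c \/ Rabs (u n - P) <= Rabs (u 0%nat - P) - INR n * d.
Proof.
intros Hd. induction n as [|n IH].
- right. simpl. lra.
- destruct (Rlt_dec (Rabs (u n - P)) c) as [Hlt|Hge].
  + left. specialize (u_nonexpansive n). lra.
  + right. specialize (Hd n ltac:(lra)). rewrite S_INR.
    destruct IH as [|IH]; lra.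
Qed.

Lemma Un_cv_of_uniform_descent : Un_cv u P.
Proof.
intros eps Heps. destruct (u_descent eps Heps) as [d [Hd Hstep]].
destruct (INR_archimed d (Rabs (u 0%nat - P)) Hd) as [N HN].
exists N. intros n Hn. unfold Rdist.
destruct (uniform_descent_bound eps d Hstep n) as [|Hn_bound]; [assumption|].
assert (INR N * d <= INR n * d) by (apply Rmult_le_compat_r; [lra|apply le_INR; lia]).
pose proof (Rabs_pos (u n - P)). lra.
Qed.

End UniformDescent.

Lemma exists_root_lipschitz01 (h : R -> R) L :
  0 <= L ->
  (forall a b, 0 <= a <= 1 -> 0 <= b <= 1 -> Rabs (h a - h b) <= L * Rabs (a - b)) ->
  h 0 > 1 -> h 1 < 1 -> exists P, 0 <= P <= 1 /\ h P = 1.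
Proof.
intros HL Hlip Hh0 Hh1.
set (clamp := fun z => Rmax 0 (Rmin z 1)).
assert (clamp01 : forall z, 0 <= clamp z <= 1)
  by (intros; unfold clamp, Rmax, Rmin; repeat destruct Rle_dec; lra).
assert (clamp_id : forall z, 0 <= z <= 1 -> clamp z = z)
  by (intros; unfold clamp, Rmax, Rmin; repeat destruct Rle_dec; lra).
assert (Hcont : continuity (fun z => 1 - h (clamp z))).
{ apply lipschitz_continuity with L; [assumption|]. intros a b.
  replace (1 - h (clamp a) - (1 - h (clamp b))) with (h (clamp b) - h (clamp a)) by ring.
  eapply Rle_trans; [apply Hlip; apply clamp01|].
  apply Rmult_le_compat_l; [assumption|].
  rewrite Rabs_minus_sym. apply Rabs_clamp01_le. }
destruct (IVT _ 0 1 Hcont) as [z [Hz Hhz]]; [lra | rewrite clamp_id; lra.. |].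
exists z. rewrite clamp_id in Hhz by lra. split; lra.
Qed.

Lemma decreasing_injective01 (h : R -> R) a b :
  (forall a b, 0 <= a -> a < b -> b <= 1 -> h b < h a) ->
  0 <= a <= 1 -> 0 <= b <= 1 -> h a = h b -> a = b.
Proof.
intros Hdec Ha Hb Hab. destruct (Rtotal_order a b) as [H|[H|H]]; auto.
- assert (h b < h a) by (apply Hdec; lra). lra.
- assert (h a < h b) by (apply Hdec; lra). lra.
Qed.

Section PenaltyStep.

Variables (alpha L P : R) (h : R -> R).

Hypothesis alpha_pos : 0 < alpha.
Hypothesis L_nonneg : 0 <= L.
Hypothesis alphaL_lt2 : alpha * L < 2.
Hypothesis h_lipschitz : forall a b, 0 <= a <= 1 -> 0 <= b <= 1 ->
  Rabs (h a - h b) <= L * Rabs (a - b).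
Hypothesis h_decr : forall a b, 0 <= a -> a < b -> b <= 1 -> h b < h a.
Hypothesis P_interior : 0 < P < 1.
Hypothesis h_P : h P = 1.

Definition drift q := h (Rmin q 1) - 1.

Definition penalty_step q := Rmax 0 (q + alpha * drift q).

Lemma h_nonincr a b : 0 <= a -> a <= b -> b <= 1 -> h b <= h a.
Proof.
intros. destruct (Req_dec a b) as [->|]; [lra|]. left; apply h_decr; lra.
Qed.

Lemma Rmin1_bounds q : 0 <= q -> 0 <= Rmin q 1 <= 1.
Proof. intros. unfold Rmin; destruct Rle_dec; lra. Qed.

Lemma drift_lipschitz q : 0 <= q -> Rabs (drift q) <= L * Rabs (q - P).
Proof.
intros Hq. unfold drift. rewrite <- h_P at 2.
eapply Rle_trans; [apply h_lipschitz; [apply Rmin1_bounds | ]; lra|].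
apply Rmult_le_compat_l; [lra|]. apply Rabs_Rmin1_le; lra.
Qed.

Lemma drift_opposite q : 0 <= q -> (q - P) * drift q <= 0.
Proof.
intros Hq. unfold drift. destruct (Rle_dec P q).
- assert (h (Rmin q 1) <= h P); [|nra].
  apply h_nonincr; [lra | apply Rmin_glb; lra | apply Rmin_r].
- assert (h P <= h (Rmin q 1)); [|nra].
  rewrite Rmin_left by lra. apply h_nonincr; lra.
Qed.

Lemma drift_away c : 0 < c -> exists m, 0 < m /\
  forall q, 0 <= q -> c <= Rabs (q - P) -> m <= Rabs (drift q).
Proof.
intros Hc.
assert (above : h (Rmin (P + c) 1) < 1).
{ enough (h (Rmin (P + c) 1) < h P) by lra.
  apply h_decr; [lra | apply Rmin_glb_lt; lra | apply Rmin_r]. }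
assert (below : 1 < h (Rmax 0 (P - c))).
{ enough (h P < h (Rmax 0 (P - c))) by lra.
  apply h_decr; [apply Rmax_l | apply Rmax_lub_lt; lra | lra]. }
exists (Rmin (1 - h (Rmin (P + c) 1)) (h (Rmax 0 (P - c)) - 1)). split.
- apply Rmin_glb_lt; lra.
- intros q Hq Hqc. unfold drift. destruct (Rle_dec P q).
  + rewrite Rabs_right in Hqc by lra.
    assert (h (Rmin q 1) <= h (Rmin (P + c) 1))
      by (apply h_nonincr; unfold Rmin; repeat destruct Rle_dec; lra).
    pose proof (Rmin_l (1 - h (Rmin (P + c) 1)) (h (Rmax 0 (P - c)) - 1)).
    rewrite Rabs_left1; lra.
  + rewrite Rabs_left in Hqc by lra. rewrite (Rmin_left q 1) by lra.
    assert (h (Rmax 0 (P - c)) <= h q)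
      by (apply h_nonincr; unfold Rmax; repeat destruct Rle_dec; lra).
    pose proof (Rmin_r (1 - h (Rmin (P + c) 1)) (h (Rmax 0 (P - c)) - 1)).
    rewrite Rabs_right; lra.
Qed.

Lemma penalty_step_descent q m :
  0 <= q -> 0 <= m -> m <= alpha * Rabs (drift q) ->
  m <= (2 - alpha * L) * Rabs (q - P) ->
  Rabs (penalty_step q - P) <= Rabs (q - P) - m.
Proof.
intros Hq Hm Hm_drift Hm_dist. unfold penalty_step.
eapply Rle_trans; [apply Rabs_Rmax0_le; lra|].
replace (q + alpha * drift q - P) with ((q - P) + alpha * drift q) by ring.
pose proof (drift_lipschitz q Hq).
apply Rabs_add_opposite_le; rewrite ?Rabs_mult, ?(Rabs_right alpha) by lra.
- pose proof (drift_opposite q Hq). nra.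
- lra.
- nra.
Qed.

Lemma penalty_step_nonexpansive q :
  0 <= q -> Rabs (penalty_step q - P) <= Rabs (q - P).
Proof.
intros Hq. rewrite <- (Rminus_0_r (Rabs (q - P))).
pose proof (Rabs_pos (drift q)). pose proof (Rabs_pos (q - P)).
apply penalty_step_descent; nra.
Qed.

Lemma penalty_step_uniform_descent c : 0 < c -> exists d, 0 < d /\
  forall q, 0 <= q -> c <= Rabs (q - P) ->
  Rabs (penalty_step q - P) <= Rabs (q - P) - d.
Proof.
intros Hc. destruct (drift_away c Hc) as [m [Hm Hdrift]].
exists (Rmin (alpha * m) ((2 - alpha * L) * c)). split.
- apply Rmin_glb_lt; apply Rmult_lt_0_compat; lra.
- intros q Hq Hqc. specialize (Hdrift q Hq Hqc).
  pose proof (Rmin_l (alpha * m) ((2 - alpha * L) * c)).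
  pose proof (Rmin_r (alpha * m) ((2 - alpha * L) * c)).
  apply penalty_step_descent; [lra | apply Rmin_glb; nra | nra | nra].
Qed.

End PenaltyStep.

Theorem theorem2 (alpha : R) (x xbar : nat -> R) (h : R -> R)
  (Halpha : 0 < alpha < 1)
  (Hx : forall t, 0 <= x t)
  (Hxbar : forall t, 0 < xbar t)
  (Hh : forall t, x t / xbar t = h (p_nack alpha x xbar t))
  (Hh0 : h 0 > 1)
  (Hh1 : h 1 < 1)
  (Hdec : forall a b, 0 <= a -> a < b -> b <= 1 -> h b < h a)
  (Hlip : exists L, 0 <= L /\ L < 2 / alpha /\
          forall a b, 0 <= a <= 1 -> 0 <= b <= 1 ->
            Rabs (h a - h b) <= L * Rabs (a - b)) :
  exists P : R,
    (0 <= P <= 1 /\ h P = 1) /\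
    (forall Q, 0 <= Q <= 1 -> h Q = 1 -> Q = P) /\
    Un_cv (penalty alpha x xbar) P /\
    Un_cv (fun t => x t / xbar t) 1.
Proof.
destruct Hlip as [L [HL0 [HL2 Hl]]].
assert (HaL : alpha * L < 2).
{ apply Rmult_lt_compat_l with (r := alpha) in HL2; [|lra].
  replace (alpha * (2 / alpha)) with 2 in HL2 by (field; lra). lra. }
destruct (exists_root_lipschitz01 h L HL0 Hl Hh0 Hh1) as [P [HP HhP]].
assert (HP01 : 0 < P < 1).
{ destruct HP as [[? | <-] [? | ->]]; lra. }
set (p := penalty alpha x xbar).
assert (p_nonneg : forall t, 0 <= p t) by (intros [|t]; [unfold p; simpl; lra | apply Rmax_l]).
assert (p_step : forall t, p (S t) = penalty_step alpha h (p t)).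
{ intros t. unfold p; simpl. rewrite Hh. reflexivity. }
assert (p_cv : Un_cv p P).
{ apply Un_cv_of_uniform_descent.
  - intros n. rewrite p_step. apply penalty_step_nonexpansive with L; auto; lra.
  - intros c Hc. destruct (penalty_step_uniform_descent alpha L P h) with c
      as [d [Hd Hdesc]]; auto; try lra.
    exists d. split; [assumption|]. intros n. rewrite p_step. auto. }
exists P. repeat split; try lra.
- intros Q HQ HhQ. apply (decreasing_injective01 h); auto; congruence.
- exact p_cv.
- apply (Un_cv_lipschitz_image p _ P 1 L HL0); [|exact p_cv].
  intros n. rewrite Hh. apply (drift_lipschitz L P h); auto; lra.
Qed.
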